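(* Let $\Omega_h\subset\mathbb{R}^2$ be a simply connected polygon with a regular triangulation $\mathcal{T}_h$, and let $x^{(1)},\dots,x^{(N)}$ be its boundary vertices in counterclockwise order, $X=(x^{(1)},\dots,x^{(N)})$. Let $t^0>0$, $\mu,\lambda,\delta>0$, $M>0$, and let $\ell:\mathcal{S}^1(\mathcal{T}_h)^2\to\mathbb{R}$ be a linear functional (the discrete shape derivative $J_h'(\Omega_h;\cdot)$). Let $(V_h,F_h)$ be a solution of the convex quadratic program \[ \begin{aligned} &\text{minimize } \tfrac12\mathcal{E}_h(V_h,V_h)+\ell(V_h) \text{ over } V_h\in\mathcal{S}^1(\mathcal{T}_h)^2,\ F_h\in\mathcal{S}^1(\partial\mathcal{T}_h),\\ &\text{s.t. } C_i(X)+t^0\,DC_i(X)\,V_h(X)\le 0\ (i=1,\dots,N),\qquad \mathcal{E}_h(V_h,W_h)=\int_{\partial\Omega_h}F_h\,(W_h\cdot n)\,ds\ \ \forall W_h\in\mathcal{S}^1(\mathcal{T}_h)^2, \end{aligned} \] with $V_h\ne0$, and let $\lambda=(\lambda_1,\dots,\lambda_N)\in\mathbb{R}^N$ be a Lagrange multiplier for $V_h$ associated with the linearized convexity constraints. If $M\ge t^0\sup_{i=1,\dots,N}\lambda_i$, then \[ \varphi'(0):=\ell(V_h)+M\sum_{i:\,C_i(X)=0}\bigl[DC_i(X)V_h(X)\bigr]^+ + M\sum_{i:\,C_i(X)>0}DC_i(X)V_h(X)<0 . \]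
   Context: $\mathcal{S}^1(\mathcal{T}_h)$ denotes continuous elementwise affine functions on $\mathcal{T}_h$, $\mathcal{S}^1(\partial\mathcal{T}_h)$ continuous piecewise affine functions on $\partial\Omega_h$, $n$ the outer unit normal. $\mathcal{E}_h(V,W)=\int_{\Omega_h}2\mu\,\varepsilon(V):\varepsilon(W)+\lambda\,\mathrm{tr}\,\varepsilon(V)\,\mathrm{tr}\,\varepsilon(W)+\delta\,V\cdot W\,dx$ with $\varepsilon(V)=(DV+DV^\top)/2$ (here $\lambda$ in $\mathcal{E}_h$ is the Lamé parameter, distinct from the multiplier vector). With conventions $x^{(0)}=x^{(N)}$, $x^{(N+1)}=x^{(1)}$, $C_i(X)=(x^{(i-1)}_1-x^{(i)}_1)(x^{(i+1)}_2-x^{(i)}_2)-(x^{(i-1)}_2-x^{(i)}_2)(x^{(i+1)}_1-x^{(i)}_1)$, and $DC_i(X)V_h(X)$ denotes the derivative of $C_i$ at $X$ applied to the vector $(V_h(x^{(1)}),\dots,V_h(x^{(N)}))$. A Lagrange multiplier means: there exist $\lambda\in\mathbb{R}^N$ and $W_h\in\mathcal{S}^1(\mathcal{T}_h)^2$ with $\mathcal{E}_h(V_h,\delta V)+\ell(\delta V)+\sum_i\lambda_i t^0 DC_i(X)\delta V(X)+\mathcal{E}_h(\delta V,W_h)=0$ for all $\delta V\in\mathcal{S}^1(\mathcal{T}_h)^2$, $\int_{\partial\Omega_h}\delta F\,(W_h\cdot n)\,ds=0$ for all $\delta F\in\mathcal{S}^1(\partial\mathcal{T}_h)$, and $0\le\lambda_i\perp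 C_i(X)+t^0DC_i(X)V_h(X)\le0$ for all $i$. The quantity $\varphi'(0)$ is the one-sided derivative at $0$ of the merit function $\varphi(t)=J_h((I+tV_h)(\Omega_h))+M\sum_i[C_i(X+tV_h(X))]^+$ when $\ell=J_h'(\Omega_h;\cdot)$. *)

From HB Require Import structures.
From mathcomp Require Import all_boot all_order all_algebra.
From mathcomp Require Import reals.
From mathcomp Require Import ring lra.

Set Implicit Arguments.
Unset Strict Implicit.
Unset Printing Implicit Defensive.
Import Order.TTheory GRing.Theory Num.Theory.
Local Open Scope ring_scope.

Section Defs.
Variable R : realType.

Definition vadd (u v : R * R) : R * R := (u.1 + v.1, u.2 + v.2).
Definition vsub (u v : R * R) : R * R := (u.1 - v.1, u.2 - v.2).
Definition vscale (a : R) (u : R * R) : R * R := (a * u.1, a * u.2).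
Definition dot (u v : R * R) : R := u.1 * v.1 + u.2 * v.2.
Definition cross (u v : R * R) : R := u.1 * v.2 - u.2 * v.1.
Definition vzero : R * R := (0, 0).

(* ---------- the mesh ----------
   vertices 'I_nv with coordinates p, triangles 'I_nt -> (a, b, c)
   (vertex indices, counterclockwise), boundary vertices b : 'I_N -> 'I_nv
   listed counterclockwise (x^(i+1) = p (b i)). *)

Definition tri_verts nv (t : 'I_nv * 'I_nv * 'I_nv) : seq 'I_nv :=
  [:: t.1.1; t.1.2; t.2].

Definition area2 nv (p : 'I_nv -> R * R) (t : 'I_nv * 'I_nv * 'I_nv) : R :=
  cross (vsub (p t.1.2) (p t.1.1)) (vsub (p t.2) (p t.1.1)).

Definition in_open_tri nv (p : 'I_nv -> R * R) (t : 'I_nv * 'I_nv * 'I_nv)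
    (x : R * R) : Prop :=
  [/\ 0 < cross (vsub (p t.1.2) (p t.1.1)) (vsub x (p t.1.1)),
      0 < cross (vsub (p t.2) (p t.1.2)) (vsub x (p t.1.2)) &
      0 < cross (vsub (p t.1.1) (p t.2)) (vsub x (p t.2))].

Definition dedge nv (t : 'I_nv * 'I_nv * 'I_nv) (a c : 'I_nv) : bool :=
  [|| (t.1.1 == a) && (t.1.2 == c), (t.1.2 == a) && (t.2 == c)
    | (t.2 == a) && (t.1.1 == c)].

Definition edge_count nv nt (tri : 'I_nt -> 'I_nv * 'I_nv * 'I_nv)
    (a c : 'I_nv) : nat := #|[set k : 'I_nt | dedge (tri k) a c]|.

(* Conforming triangulation of a simply connected polygon, whose boundary
   (the edges belonging to exactly one triangle) is the single simple closed
   counterclockwise polygon b 0 -> b 1 -> ... -> b (N-1) -> b 0. *)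
Record disk_triangulation nv nt N (p : 'I_nv -> R * R)
    (tri : 'I_nt -> 'I_nv * 'I_nv * 'I_nv) (b : 'I_N -> 'I_nv) : Prop := {
  dt_N : (3 <= N)%N;
  dt_b_inj : injective b;
  dt_tri_pos : forall k, 0 < area2 p (tri k);
  dt_tri_inj : injective tri;
  dt_vert_used : forall v : 'I_nv, exists k, v \in tri_verts (tri k);
  dt_disjoint : forall k k', k != k' ->
      forall x, ~ (in_open_tri p (tri k) x /\ in_open_tri p (tri k') x);
  dt_edge_simple : forall a c, (edge_count tri a c <= 1)%N;
  dt_boundary : forall a c,
      ((edge_count tri a c == 1%N) && (edge_count tri c a == 0%N)) <->
      (exists i : 'I_N, a = b i /\ c = b (ordS i))
}.

(* ---------- P1 finite element spaces ----------
   An element of S^1(T_h)^2 is represented by its nodal values 'I_nv -> R*R,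
   an element of S^1(dT_h) by its values at the boundary vertices 'I_N -> R. *)

(* gradient (constant) on the triangle of the affine function with
   vertex values ua ub uc *)
Definition p1grad nv (p : 'I_nv -> R * R) (t : 'I_nv * 'I_nv * 'I_nv)
    (ua ub uc : R) : R * R :=
  let e1 := vsub (p t.1.2) (p t.1.1) in
  let e2 := vsub (p t.2) (p t.1.1) in
  let D := area2 p t in
  (((ub - ua) * e2.2 - (uc - ua) * e1.2) / D,
   ((uc - ua) * e1.1 - (ub - ua) * e2.1) / D).

(* (eps11, eps22, eps12) of a P1 vector field on triangle t *)
Definition p1eps nv (p : 'I_nv -> R * R) (t : 'I_nv * 'I_nv * 'I_nv)
    (V : 'I_nv -> R * R) : R * R * R :=
  let g1 := p1grad p t (V t.1.1).1 (V t.1.2).1 (V t.2).1 in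
  let g2 := p1grad p t (V t.1.1).2 (V t.1.2).2 (V t.2).2 in
  (g1.1, g2.2, (g1.2 + g2.1) / 2).

Definition epsdot (e f : R * R * R) : R :=
  e.1.1 * f.1.1 + e.1.2 * f.1.2 + 2 * (e.2 * f.2).
Definition epstr (e : R * R * R) : R := e.1.1 + e.1.2.

(* exact value of \int_T V.W dx for P1 fields:
   |T|/12 * sum_{i,j} (1 + [i = j]) V_i . W_j *)
Definition p1mass nv (p : 'I_nv -> R * R) (t : 'I_nv * 'I_nv * 'I_nv)
    (V W : 'I_nv -> R * R) : R :=
  area2 p t / 24 *
  (dot (vadd (vadd (V t.1.1) (V t.1.2)) (V t.2))
       (vadd (vadd (W t.1.1) (W t.1.2)) (W t.2))
   + dot (V t.1.1) (W t.1.1) + dot (V t.1.2) (W t.1.2) + dot (V t.2) (W t.2)).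

(* E_h(V,W) = int_{Omega_h} 2 mu eps(V):eps(W) + lam tr eps(V) tr eps(W)
              + dlt V.W dx   (integrand of the first two terms is constant
              on each triangle, area = area2 / 2) *)
Definition Eh nv nt (p : 'I_nv -> R * R) (tri : 'I_nt -> 'I_nv * 'I_nv * 'I_nv)
    (mu lam dlt : R) (V W : 'I_nv -> R * R) : R :=
  \sum_(k < nt)
    (area2 p (tri k) / 2 *
       (2 * mu * epsdot (p1eps p (tri k) V) (p1eps p (tri k) W)
        + lam * (epstr (p1eps p (tri k) V) * epstr (p1eps p (tri k) W)))
     + dlt * p1mass p (tri k) V W).

(* int_{dOmega_h} F (W.n) ds, exactly evaluated edge by edge: on the edge
   e = x^(i) -> x^(i+1) (counterclockwise), n ds = (e_2, -e_1) ds'/|e| *|e|,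
   and int_0^1 F W ds' = (2 F_a W_a + F_a W_b + F_b W_a + 2 F_b W_b) / 6. *)
Definition bdry_int nv N (p : 'I_nv -> R * R) (b : 'I_N -> 'I_nv)
    (F : 'I_N -> R) (W : 'I_nv -> R * R) : R :=
  \sum_(i < N)
    let j := ordS i in
    let e := vsub (p (b j)) (p (b i)) in
    let FW := vadd (vadd (vscale (2 * F i) (W (b i))) (vscale (F i) (W (b j))))
                   (vadd (vscale (F j) (W (b i))) (vscale (2 * F j) (W (b j)))) in
    dot (vscale (1 / 6) FW) (e.2, - e.1).

(* ---------- convexity constraints ----------
   with x^(0) = x^(N), x^(N+1) = x^(1) (cyclic indices ord_pred / ordS) *)
Definition Cc N (X : 'I_N -> R * R) (i : 'I_N) : R :=
  cross (vsub (X (ord_pred i)) (X i)) (vsub (X (ordS i)) (X i)).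

Definition DCc N (X Y : 'I_N -> R * R) (i : 'I_N) : R :=
  cross (vsub (Y (ord_pred i)) (Y i)) (vsub (X (ordS i)) (X i))
  + cross (vsub (X (ord_pred i)) (X i)) (vsub (Y (ordS i)) (Y i)).

(* sanity check: DCc is the derivative of Cc (Cc is quadratic) *)
Lemma Cc_expand N (X Y : 'I_N -> R * R) (i : 'I_N) (t : R) :
  Cc (fun j => vadd (X j) (vscale t (Y j))) i
  = Cc X i + t * DCc X Y i + t ^+ 2 * Cc Y i.
Proof. rewrite /Cc /DCc /cross /vsub /vadd /vscale /=; ring. Qed.

Definition linear_functional nv (l : ('I_nv -> R * R) -> R) : Prop :=
  forall (a : R) (U W : 'I_nv -> R * R),
    l (fun k => vadd (vscale a (U k)) (W k)) = a * l U + l W.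

End Defs.

(* Testing the stationarity condition of the Lagrangian with dV = V, the adjoint
   term E(V, W) vanishes because V is feasible for the state constraint and W is
   orthogonal to every boundary datum, so
     ell V = - E(V, V) - sum_i lm_i t0 DC_i V,
   with E(V, V) > 0 since V <> 0 (the mass term is positive on any triangle
   touching a vertex where V is nonzero).  Complementarity makes every term
   lm_i t0 DC_i V with C_i <= 0 nonnegative; where C_i > 0 the linearized
   constraint forces DC_i V < 0, so M DC_i V <= t0 lm_i DC_i V; and where
   C_i = 0 it forces DC_i V <= 0, so the positive part vanishes. *)
From HB Require Import structures.
From mathcomp Require Import all_boot all_order all_algebra.
From mathcomp Require Import reals ring lra.
From Stdlib Require Import FunctionalExtensionality.
Set Implicit Arguments.
Unset Strict Implicit.
Unset Printing Implicit Defensive.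
Import Order.TTheory GRing.Theory Num.Theory.
Local Open Scope ring_scope.

Section ExactPenalty.
Variables (R : realFieldType) (I : finType).
Variables (c d lm : I -> R) (t0 M : R).
Hypothesis t0_gt0 : 0 < t0.
Hypothesis lm_ge0 : forall i, 0 <= lm i.
Hypothesis lin_feasible : forall i, c i + t0 * d i <= 0.
Hypothesis complementary : forall i, lm i * (c i + t0 * d i) = 0.

Lemma active_pospart_eq0 i : c i = 0 -> Num.max (d i) 0 = 0.
Proof.
move=> ci0; apply/max_idPr; rewrite -(pmulr_rle0 _ t0_gt0).
by have := lin_feasible i; rewrite ci0 add0r.
Qed.

Lemma satisfied_multiplier_term_ge0 i : c i <= 0 -> 0 <= lm i * t0 * d i.
Proof. by have := lm_ge0 i; have := complementary i => *; nra. Qed.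

Lemma violated_penalty_le_multiplier_term i :
  t0 * lm i <= M -> 0 < c i -> M * d i <= lm i * t0 * d i.
Proof.
move=> t0lm_le ci_gt0.
have d_le0 : d i <= 0.
  by rewrite -(pmulr_rle0 _ t0_gt0); have := lin_feasible i => *; lra.
nra.
Qed.

Lemma exact_penalty_derivative_lt0 (E ellV : R) :
  0 < E -> t0 * \big[Num.max/0]_i lm i <= M ->
  E + ellV + \sum_i lm i * t0 * d i = 0 ->
  ellV + M * (\sum_(i | c i == 0) Num.max (d i) 0)
  + M * (\sum_(i | 0 < c i) d i) < 0.
Proof.
move=> E_gt0 HM stationary.
have t0lm_le i : t0 * lm i <= M.
  by apply: le_trans HM; rewrite ler_pM2l // le_bigmax.
have -> : \sum_(i | c i == 0) Num.max (d i) 0 = 0.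
  by apply: big1 => i /eqP; apply: active_pospart_eq0.
have violated : M * (\sum_(i | 0 < c i) d i)
                <= \sum_(i | 0 < c i) lm i * t0 * d i.
  rewrite mulr_sumr; apply: ler_sum => i.
  exact: violated_penalty_le_multiplier_term.
have satisfied : 0 <= \sum_(i | ~~ (0 < c i)) lm i * t0 * d i.
  apply: sumr_ge0 => i; rewrite -leNgt.
  exact: satisfied_multiplier_term_ge0.
rewrite (bigID (fun i => 0 < c i)) /= in stationary.
lra.
Qed.

End ExactPenalty.

Section EnergyPositivity.
Variable R : realType.

Lemma dot_ge0 (x : R * R) : 0 <= dot x x.
Proof. by rewrite /dot -!expr2 addr_ge0 ?sqr_ge0. Qed.

Lemma dot_gt0 (x : R * R) : x != vzero R -> 0 < dot x x.
Proof.
case: x => x y; rewrite /dot /vzero xpair_eqE negb_and /= -!expr2.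
by case/orP=> nz; [apply: ltr_pwDl | apply: ltr_pwDr];
  rewrite ?sqr_ge0 // exprn_even_gt0.
Qed.

Lemma epsdot_ge0 (e : R * R * R) : 0 <= epsdot e e.
Proof.
by rewrite /epsdot -!expr2 addr_ge0 ?addr_ge0 ?sqr_ge0 // mulr_ge0 ?sqr_ge0.
Qed.

Lemma elastic_term_ge0 (A mu lam : R) (e : R * R * R) :
  0 < A -> 0 <= mu -> 0 <= lam ->
  0 <= A / 2 * (2 * mu * epsdot e e + lam * (epstr e * epstr e)).
Proof.
move=> A_gt0 mu_ge0 lam_ge0.
apply: mulr_ge0; first by rewrite divr_ge0 // ltW.
apply: addr_ge0; apply: mulr_ge0;
  by rewrite ?epsdot_ge0 -?expr2 ?sqr_ge0 ?mulr_ge0.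
Qed.

Variables (nv nt : nat) (p : 'I_nv -> R * R).
Variable tri : 'I_nt -> 'I_nv * 'I_nv * 'I_nv.
Hypothesis area2_gt0 : forall k, 0 < area2 p (tri k).
Variables (mu lam dlt : R) (V : 'I_nv -> R * R).
Hypotheses (mu_ge0 : 0 <= mu) (lam_ge0 : 0 <= lam) (dlt_gt0 : 0 < dlt).

Lemma p1mass_ge0 k : 0 <= p1mass p (tri k) V V.
Proof.
move: (tri k) (area2_gt0 k) => [[a b] c] A_gt0.
rewrite /p1mass mulr_ge0 ?divr_ge0 ?(ltW A_gt0) //=.
have := dot_ge0 (V a); have := dot_ge0 (V b); have := dot_ge0 (V c).
by have := dot_ge0 (vadd (vadd (V a) (V b)) (V c)) => *; lra.
Qed.

Lemma p1mass_gt0 {k v} : v \in tri_verts (tri k) -> V v != vzero R ->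
  0 < p1mass p (tri k) V V.
Proof.
move: (tri k) (area2_gt0 k) => [[a b] c] A_gt0 vk /dot_gt0 Vv_gt0.
rewrite /p1mass mulr_gt0 ?divr_gt0 //=.
have := dot_ge0 (V a); have := dot_ge0 (V b); have := dot_ge0 (V c).
have := dot_ge0 (vadd (vadd (V a) (V b)) (V c)).
by move: vk Vv_gt0; rewrite !inE => /or3P [] /eqP -> *; lra.
Qed.

Lemma Eh_gt0 : (forall v, exists k, v \in tri_verts (tri k)) ->
  V <> (fun _ => vzero R) -> 0 < Eh p tri mu lam dlt V V.
Proof.
move=> vert_used V_neq0.
have [v Vv] : exists v, V v != vzero R.
  apply/existsP; apply: contra_notT V_neq0 => /existsPn V0.
  by apply: functional_extensionality => v; apply/eqP/negPn/V0.
have [k vk] := vert_used v.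
rewrite /Eh (bigD1 k) //=; apply: ltr_wpDr.
  apply: sumr_ge0 => i _.
  by rewrite addr_ge0 ?elastic_term_ge0 // mulr_ge0 ?p1mass_ge0 // ltW.
apply: ltr_wpDl; first exact: elastic_term_ge0.
by rewrite mulr_gt0 // (p1mass_gt0 vk Vv).
Qed.

End EnergyPositivity.

Theorem mainTheorem4 (R : realType) (nv nt N : nat)
  (p : 'I_nv -> R * R) (tri : 'I_nt -> 'I_nv * 'I_nv * 'I_nv)
  (b : 'I_N -> 'I_nv)
  (Hmesh : disk_triangulation p tri b)
  (t0 mu lam dlt M : R)
  (Ht0 : 0 < t0) (Hmu : 0 < mu) (Hlam : 0 < lam) (Hdlt : 0 < dlt) (HM0 : 0 < M)
  (ell : ('I_nv -> R * R) -> R) (Hell : linear_functional ell)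
  (V : 'I_nv -> R * R) (F : 'I_N -> R)
  (Hsol :
     let X := fun i => p (b i) in
     let feasible (V' : 'I_nv -> R * R) (F' : 'I_N -> R) :=
       (forall i : 'I_N, Cc X i + t0 * DCc X (fun j => V' (b j)) i <= 0) /\
       (forall W' : 'I_nv -> R * R,
          Eh p tri mu lam dlt V' W' = bdry_int p b F' W') in
     feasible V F /\
     forall V' F', feasible V' F' ->
       Eh p tri mu lam dlt V V / 2 + ell V
       <= Eh p tri mu lam dlt V' V' / 2 + ell V')
  (HV0 : V <> (fun _ => vzero R))
  (lm : 'I_N -> R) (Wm : 'I_nv -> R * R)
  (Hmult :
     let X := fun i => p (b i) in
     [/\ forall dV : 'I_nv -> R * R,
           Eh p tri mu lam dlt V dV + ell dV
           + \sum_(i < N) lm i * t0 * DCc X (fun j => dV (b j)) i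
           + Eh p tri mu lam dlt dV Wm = 0,
         forall dF : 'I_N -> R, bdry_int p b dF Wm = 0 &
         forall i : 'I_N,
           [/\ 0 <= lm i,
               Cc X i + t0 * DCc X (fun j => V (b j)) i <= 0 &
               lm i * (Cc X i + t0 * DCc X (fun j => V (b j)) i) = 0]])
  (HM : t0 * \big[Num.max/0]_(i < N) lm i <= M) :
  let X := fun i => p (b i) in
  let VX := fun j => V (b j) in
  ell V
  + M * (\sum_(i < N | Cc X i == 0) Num.max (DCc X VX i) 0)
  + M * (\sum_(i < N | 0 < Cc X i) DCc X VX i) < 0.
Proof.
have [stationary Wm_bdry_orth kkt] := Hmult.
have [[_ state_eq] _] := Hsol.
have EVWm0 : Eh p tri mu lam dlt V Wm = 0 by rewrite state_eq Wm_bdry_orth.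
have := stationary V; rewrite EVWm0 addr0 => stationaryV.
have EVV_gt0 := Eh_gt0 (dt_tri_pos Hmesh) (ltW Hmu) (ltW Hlam) Hdlt
                       (dt_vert_used Hmesh) HV0.
by apply: (exact_penalty_derivative_lt0 Ht0 _ _ _ EVV_gt0 HM stationaryV)
  => i; case: (kkt i).
Qed.
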